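(* Let $H$ be a $3$-uniform hypergraph on $7$ vertices not containing a Fano plane. If some vertex $v$ of $H$ satisfies $d(v)\ge 11$ and $e(H\setminus v)\ge 18$, then $H\setminus v$ is isomorphic to $B_6$.
   Context: $d(v)$ is the number of edges of $H$ containing $v$; $H\setminus v$ is the hypergraph obtained by deleting $v$ and all edges containing it; $e(\cdot)$ denotes the number of edges. ''Containing'' means having a (not necessarily induced) subhypergraph isomorphic to it. The Fano plane is the hypergraph on vertex set $\{1,\dots,7\}$ with edges $123,345,156,147,367,257,246$. $B_6$ is the hypergraph on $6$ vertices with a partition into two disjoint sets $X,Y$ of size $3$ each whose edges are exactly the triples meeting both $X$ and $Y$. *)

From mathcomp Require Import all_boot.
Set Implicit Arguments. Unset Strict Implicit. Unset Printing Implicit Defensive.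

Definition hypergraph (n : nat) := {set {set 'I_n}}.

Definition uniform3 n (H : hypergraph n) : Prop := forall e, e \in H -> #|e| = 3.

(* H contains F: a (not necessarily induced) subhypergraph isomorphic to F,
   i.e. an injective vertex map sending every edge of F to an edge of H. *)
Definition contains m n (F : hypergraph m) (H : hypergraph n) : Prop :=
  exists f : 'I_m -> 'I_n, injective f /\ forall e, e \in F -> f @: e \in H.

Definition tri (a b c : nat) : {set 'I_7} := [set inord a; inord b; inord c].

(* Fano plane: vertices 1..7 of the paper are 0..6 here;
   edges 123,345,156,147,367,257,246. *)
Definition Fano : hypergraph 7 :=
  [set tri 0 1 2; tri 2 3 4; tri 0 4 5; tri 0 3 6;
       tri 2 5 6; tri 1 4 6; tri 1 3 5].

(* B_6 on 'I_6 with X = {0,1,2}, Y = {3,4,5}: all triples meeting both X and Y. *)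
Definition B6X : {set 'I_6} := [set i : 'I_6 | i < 3].
Definition B6 : hypergraph 6 :=
  [set e : {set 'I_6} | (#|e| == 3) && (e :&: B6X != set0) && (e :\: B6X != set0)].

Definition deg n (H : hypergraph n) (v : 'I_n) : nat := #|[set e in H | v \in e]|.

(* edge set of H \ v: the edges not containing v (vertex set 'I_n minus v) *)
Definition del n (H : hypergraph n) (v : 'I_n) : hypergraph n :=
  [set e in H | v \notin e].

Definition del_iso_B6 n (H : hypergraph n) (v : 'I_n) : Prop :=
  exists g : 'I_6 -> 'I_n,
    [/\ injective g, g @: setT = [set~ v] & [set g @: e | e : {set 'I_6} in B6] = del H v].

From mathcomp Require Import all_boot zify.

Set Implicit Arguments.
Unset Strict Implicit.
Unset Printing Implicit Defensive.

(* Call a triple missing if it is not an edge of H.  The hypotheses leave at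
   most two missing triples avoiding v and at most four missing triples
   through v.  The lines through v of a Fano plane form a perfect matching of
   the other six points, so the five Fano planes built on the five matchings
   of a 1-factorization of K_6 have pairwise disjoint sets of lines through v,
   and by pigeonhole one of them has all its lines through v in H.  A finite
   search shows that when the missing triples avoiding v lie in a pair of
   intersecting triples, some relabelling of a fixed 1-factorization gives
   five such planes none of whose lines avoiding v is missing, so H contains a
   Fano plane.  Hence exactly two disjoint triples X, Y avoiding v are
   missing, and H \ v is the set of triples meeting both X and Y, i.e. B_6. *)

Lemma disjoint_pigeonhole (T : finType) (A : {set T}) (Ls : seq {set T}) :
  pairwise (fun X Y : {set T} => [disjoint X & Y]) Ls -> #|A| < size Ls ->
  exists2 L, L \in Ls & [disjoint L & A].
Proof.
elim: Ls A => [|L Ls IH] A //= /andP[/allP disj_L disj_Ls] ltA.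
have [LA|] := boolP [disjoint L & A]; first by exists L; rewrite ?mem_head.
rewrite -setI_eq0 => /set0Pn[x /setIP[xL xA]].
have [|L' L'_Ls L'A] := IH (A :\: L) disj_Ls.
  have : 0 < #|A :&: L| by apply/card_gt0P; exists x; rewrite inE xA.
  have := subset_leq_card (subsetIl A L).
  by rewrite cardsD; lia.
exists L'; first by rewrite inE L'_Ls orbT.
rewrite -setI_eq0; apply/eqP/setP => y; rewrite !inE; apply/negP => /andP[yL' yA].
have [yL|yNL] := boolP (y \in L).
  by have := disj_L L' L'_Ls; rewrite -setI_eq0 => /eqP/setP/(_ y); rewrite !inE yL yL'.
by move: L'A; rewrite -setI_eq0 => /eqP/setP/(_ y); rewrite !inE yL' yNL yA.
Qed.

Lemma card_le2_cases (T : finType) (S M : {set T}) :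
  M \subset S -> #|M| <= 2 -> S != set0 ->
  (exists2 x, x \in S & M \subset [set x]) \/
  (exists x y, [/\ x \in S, y \in S & M = [set x; y]]).
Proof.
move=> MS M2 /set0Pn[x0 x0S].
have : [|| #|M| == 0, #|M| == 1 | #|M| == 2] by case: #|M| M2 => [|[|[|]]].
case/or3P => [|/cards1P[x Mx]|/cards2P[x [y [_ Mxy]]]].
- by rewrite cards_eq0 => /eqP ->; left; exists x0; rewrite ?sub0set.
- by left; exists x; rewrite ?Mx // (subsetP MS) // Mx set11.
- by right; exists x, y; rewrite !(subsetP MS) // Mxy !inE eqxx ?orbT.
Qed.

Section TriplesAt.
Variables (T : finType) (v : T).

Definition triples_avoiding := [set t : {set T} | (#|t| == 3) && (v \notin t)].
Definition triples_through := [set t : {set T} | (#|t| == 3) && (v \in t)].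

Lemma triples_avoidingE :
  triples_avoiding = [set t : {set T} | t \subset [set~ v] & #|t| == 3].
Proof.
apply/setP => t; rewrite !inE andbC; congr (_ && _).
apply/idP/subsetP => [vt x xt|tv]; last by apply/negP => /tv; rewrite !inE eqxx.
by rewrite !inE; apply: contraNneq vt => <-.
Qed.

Lemma card_triples_avoiding : #|triples_avoiding| = 'C(#|T|.-1, 3).
Proof. by rewrite triples_avoidingE cards_draws cardsC1. Qed.

Lemma card_triples_through : #|triples_through| = 'C(#|T|.-1, 2).
Proof.
have /prednK nT : 0 < #|T| by apply/card_gt0P; exists v.
have : 'C(#|T|, 3) = #|triples_through| + #|triples_avoiding|.
  rewrite -card_draws -(cardsID [set t : {set T} | v \in t]).
  by congr (_ + _); apply: eq_card => t; rewrite !inE // andbC.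
have := card_triples_avoiding; rewrite -[in 'C(#|T|, 3)]nT binS; lia.
Qed.

End TriplesAt.

Lemma del_sub_triples_avoiding n (H : hypergraph n) (v : 'I_n) :
  uniform3 H -> del H v \subset triples_avoiding v.
Proof. by move=> H3; apply/subsetP => e; rewrite !inE => /andP[eH ->]; rewrite H3. Qed.

Lemma link_sub_triples_through n (H : hypergraph n) (v : 'I_n) :
  uniform3 H -> [set e in H | v \in e] \subset triples_through v.
Proof. by move=> H3; apply/subsetP => e; rewrite !inE => /andP[eH ->]; rewrite H3. Qed.

Lemma card_B6X : #|B6X| = 3.
Proof.
have widen_inj : injective (widen_ord (isT : 3 <= 6)).
  by move=> i j /(congr1 val) /= /val_inj.
rewrite -[RHS](card_ord 3) -(card_imset _ widen_inj).
apply: eq_card => i; rewrite inE; apply/idP/imsetP => [i3|[j _ ->]].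
  by exists (Ordinal i3); last exact: val_inj.
by case: j.
Qed.

Lemma card_B6XC : #|~: B6X| = 3.
Proof. by rewrite cardsCs setCK card_B6X card_ord. Qed.

Lemma B6E : B6 = [set e : {set 'I_6} | #|e| == 3] :\: [set B6X; ~: B6X].
Proof.
apply/setP => e; rewrite !inE; have [e3|_] := eqVneq #|e| 3; last by rewrite !andbF.
rewrite -[B6X in e :&: B6X]setCK -setDE !setD_eq0 !eqEcard e3 card_B6X card_B6XC.
by rewrite !leqnn !andbT negb_or andbC.
Qed.

Lemma B6_labelling_map (T : finType) (X Y : {set T}) :
  #|X| = 3 -> #|Y| = 3 -> [disjoint X & Y] ->
  exists g : 'I_6 -> T, [/\ injective g, g @: B6X = X & g @: (~: B6X) = Y].
Proof.
move=> X3 Y3 dXY.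
have [x0 _] : exists x0, x0 \in X by apply/card_gt0P; rewrite X3.
pose s := enum X ++ enum Y; pose g (i : 'I_6) := nth x0 s i.
have size_s : size s = 6 by rewrite size_cat -!cardE X3 Y3.
have uniq_s : uniq s.
  rewrite cat_uniq !enum_uniq andbT /=; apply/hasPn => y; rewrite !mem_enum => yY.
  by rewrite (disjointFl dXY yY).
have g_inj : injective g by move=> i j /eqP; rewrite nth_uniq ?size_s // => /eqP /val_inj.
have g_side i : g i \in (if i < 3 then X else Y).
  rewrite /g nth_cat -cardE X3; case: ifP => i3; rewrite -mem_enum mem_nth //.
    by rewrite -cardE X3.
  by rewrite -cardE Y3; have := ltn_ord i; lia.
have gX i : (g i \in X) = (i < 3).
  by have := g_side i; case: ifP => // _ /(disjointFl dXY).
have gY i : (g i \in Y) = (i \in ~: B6X).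
  by have := g_side i; rewrite !inE; case: ifP => // _ /(disjointFr dXY).
have g_onto x : x \in X :|: Y -> exists i, x = g i.
  move=> xXY; have xs : x \in s by rewrite mem_cat !mem_enum -in_setU.
  have ltx : index x s < 6 by rewrite -size_s index_mem.
  by exists (Ordinal ltx); rewrite /g nth_index.
exists g; split=> //; apply/setP => x; apply/imsetP/idP => [[i + ->]|xXY].
- by rewrite inE gX.
- have [|i xi] := g_onto x; first by rewrite inE xXY.
  by exists i; rewrite // inE -gX -xi.
- by rewrite gY.
- have [|i xi] := g_onto x; first by rewrite inE xXY orbT.
  by exists i; rewrite // -gY -xi.
Qed.

Lemma imset_B6 (T : finType) (g : 'I_6 -> T) : injective g ->
  [set g @: e | e : {set 'I_6} in B6] =
  [set t : {set T} | t \subset g @: setT & #|t| == 3] :\: [set g @: B6X; g @: (~: B6X)].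
Proof.
move=> g_inj; rewrite B6E; apply/setP => t; apply/imsetP/idP => [[e + ->]|].
  rewrite !inE (card_imset _ g_inj) !(inj_eq (imset_inj g_inj)).
  by case/andP=> -> ->; rewrite imsetS ?subsetT.
rewrite !inE => /andP[tD /andP[/subsetP tg /eqP t3]].
have gK : g @: (g @^-1: t) = t.
  apply/setP => x; apply/imsetP/idP => [[i + ->]|xt]; first by rewrite inE.
  by have /imsetP[i _ xi] := tg x xt; exists i; rewrite // inE -xi.
exists (g @^-1: t); last by rewrite gK.
rewrite !inE -(card_imset _ g_inj) gK t3 eqxx andbT.
by rewrite -!(inj_eq (imset_inj g_inj)) gK.
Qed.

Lemma del_iso_B6_of_missing_pair (H : hypergraph 7) (v : 'I_7) (X Y : {set 'I_7}) :
  uniform3 H -> X \in triples_avoiding v -> Y \in triples_avoiding v -> [disjoint X & Y] ->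
  triples_avoiding v :\: del H v = [set X; Y] -> del_iso_B6 H v.
Proof.
move=> H3; rewrite !inE => /andP[/eqP X3 vX] /andP[/eqP Y3 vY] dXY missing.
have [g [g_inj gX gY]] := B6_labelling_map X3 Y3 dXY.
have gT : g @: setT = [set~ v].
  apply/eqP; rewrite eqEcard card_imset // cardsC1 cardsT !card_ord leqnn andbT.
  rewrite -(setUCr B6X) imsetU gX gY; apply/subsetP => x.
  by rewrite !inE => /orP[] xXY; apply/eqP => xv; rewrite -xv xXY in vX vY.
exists g; split=> //.
rewrite imset_B6 // gT gX gY -triples_avoidingE -missing setDDr setDv set0U.
exact/setIidPr/del_sub_triples_avoiding.
Qed.

(* Finsets do not reduce under vm_compute, so the finite search below works
   with lists of naturals below 7, read back as vertex sets through vset. *)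
Definition vset (s : seq nat) : {set 'I_7} := [set x : 'I_7 | nat_of_ord x \in s].

Definition same_elems (s1 s2 : seq nat) := all (mem s2) s1 && all (mem s1) s2.

Lemma vset_eqE s1 s2 : all (gtn 7) s1 -> all (gtn 7) s2 ->
  (vset s1 == vset s2) = same_elems s1 s2.
Proof.
move=> /allP lt1 /allP lt2; apply/eqP/andP => [E|[/allP s12 /allP s21]].
  split; apply/allP => i i_s; [have i7 := lt1 i i_s | have i7 := lt2 i i_s].
    by move/setP/(_ (Ordinal i7)): E; rewrite !inE i_s => <-.
  by move/setP/(_ (Ordinal i7)): E; rewrite !inE i_s => ->.
by apply/setP => x; rewrite !inE; apply/idP/idP => [/s12|/s21].
Qed.

Lemma card_vset s : uniq s -> all (gtn 7) s -> #|vset s| = size s.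
Proof.
move=> uniq_s /allP lt_s.
have -> : vset s = [set x in map inord s].
  apply/setP => x; rewrite !inE; apply/idP/mapP => [xs|[i i_s ->]].
    by exists (val x); rewrite ?inord_val.
  by rewrite inordK //; apply: lt_s.
rewrite cardsE -(size_map (@inord 6)); apply/card_uniqP; rewrite map_inj_in_uniq // => i j i_s j_s.
by move/(congr1 val); rewrite /= !inordK //; [apply: lt_s | apply: lt_s].
Qed.

Definition fano_lines : seq (seq nat) :=
  [:: [:: 0; 1; 2]; [:: 2; 3; 4]; [:: 0; 4; 5]; [:: 0; 3; 6];
      [:: 2; 5; 6]; [:: 1; 4; 6]; [:: 1; 3; 5]].

Lemma fano_lines_ok : all (fun l => [&& uniq l, size l == 3 & all (gtn 7) l]) fano_lines.
Proof. by []. Qed.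

Lemma tri_vset a b c : a < 7 -> b < 7 -> c < 7 -> tri a b c = vset [:: a; b; c].
Proof. by move=> a7 b7 c7; apply/setP => x; rewrite !inE -!val_eqE /= !inordK // orbA. Qed.

Lemma Fano_vset e : e \in Fano -> e \in [seq vset l | l <- fano_lines].
Proof. by rewrite !inE !tri_vset // !orbA. Qed.

Definition labelling_map (p : seq nat) (i : 'I_7) : 'I_7 := inord (nth 0 p i).

Definition plane_lines (p : seq nat) := [seq map (nth 0 p) l | l <- fano_lines].

Section Labelling.
Variable p : seq nat.
Hypothesis p_perm : perm_eq p (iota 0 7).

Lemma nth_labelling_lt i : nth 0 p i < 7.
Proof.
have size_p : size p = 7 by rewrite (perm_size p_perm) size_iota.
have [i7|i7] := ltnP i 7; last by rewrite nth_default ?size_p.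
have : nth 0 p i \in iota 0 7 by rewrite -(perm_mem p_perm) mem_nth ?size_p.
by rewrite mem_iota.
Qed.

Lemma labelling_map_inj : injective (labelling_map p).
Proof.
move=> i j /(congr1 val); rewrite /= !inordK ?nth_labelling_lt // => /eqP.
rewrite nth_uniq ?(perm_uniq p_perm) ?iota_uniq ?(perm_size p_perm) ?size_iota //.
by move/eqP/val_inj.
Qed.

Lemma labelling_map_vset l : all (gtn 7) l -> labelling_map p @: vset l = vset (map (nth 0 p) l).
Proof.
move=> /allP lt_l; apply/setP => x; rewrite inE; apply/imsetP/mapP => [[i + ->]|[a a_l xa]].
  by rewrite inE /= inordK ?nth_labelling_lt // => i_l; exists i.
exists (Ordinal (lt_l a a_l)); first by rewrite inE.
by apply: val_inj; rewrite /= inordK ?nth_labelling_lt.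
Qed.

Lemma plane_line_triple l : l \in plane_lines p -> all (gtn 7) l /\ #|vset l| = 3.
Proof.
case/mapP => L L_fano ->; have /and3P[uL /eqP L3 ltL] := allP fano_lines_ok L L_fano.
split; first by apply/allP => i /mapP[a _ ->]; apply: nth_labelling_lt.
by rewrite -labelling_map_vset // (card_imset _ labelling_map_inj) card_vset.
Qed.

Lemma contains_Fano_of_plane (H : hypergraph 7) :
  {in plane_lines p, forall l, vset l \in H} -> contains Fano H.
Proof.
move=> lines_H; exists (labelling_map p); split; first exact: labelling_map_inj.
move=> e /Fano_vset/mapP[L L_fano ->].
have /and3P[_ _ ltL] := allP fano_lines_ok L L_fano.
by rewrite labelling_map_vset //; apply: lines_H; exact: map_f.
Qed.

End Labelling.

Definition link_lines (v : nat) (p : seq nat) := [seq l <- plane_lines p | v \in l].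

Definition avoids (s1 s2 p : seq nat) :=
  all (fun l => ~~ same_elems l s1 && ~~ same_elems l s2) (plane_lines p).

Definition links_disjoint (v : nat) (p q : seq nat) :=
  all (fun l => all (fun l' => ~~ same_elems l l') (link_lines v q)) (link_lines v p).

(* The Fano plane whose lines through 6 are {5, i}, {i - 1, i + 1} and
   {i - 2, i + 2} mod 5: for i < 5 these are the five perfect matchings of the
   standard 1-factorization of K_6 on {0, ..., 5}. *)
Definition factor_labelling (i : nat) : seq nat :=
  [:: 5; (i + 3) %% 5; (i + 4) %% 5; i; (i + 2) %% 5; (i + 1) %% 5; 6].

Definition factor_planes (r : seq nat) : seq (seq nat) :=
  [seq map (nth 0 r) (factor_labelling i) | i <- iota 0 5].

Definition relabellings (v : nat) : seq (seq nat) :=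
  [seq rcons r v | r <- permutations [seq x <- iota 0 7 | x != v]].

(* The five planes of factor_planes relabelled by the first bijection sending 6
   to v under which none of their lines is s1 or s2; find, unlike has, stops
   at the first success under vm_compute. *)
Definition certificate (v : nat) (s1 s2 : seq nat) : seq (seq nat) :=
  let R := relabellings v in
  factor_planes (nth [::] R (find (fun r => all (avoids s1 s2) (factor_planes r)) R)).

Definition certified (v : nat) (s1 s2 : seq nat) (ps : seq (seq nat)) :=
  [&& size ps == 5, all (fun p => perm_eq p (iota 0 7) && avoids s1 s2 p) ps
    & pairwise (links_disjoint v) ps].

Definition triple_seqs (v : nat) : seq (seq nat) :=
  [seq s <- [seq a :: bc | a <- iota 0 7, bc <- [seq [:: b; c] | b <- iota 0 7, c <- iota 0 7]]
     | sorted ltn s && (v \notin s)].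

Lemma certificates_ok :
  all (fun v => all (fun s1 => all (fun s2 => certified v s1 s2 (certificate v s1 s2))
      [seq s2 <- triple_seqs v | has (mem s2) s1]) (triple_seqs v)) (iota 0 7).
Proof. by vm_compute. Qed.

Lemma triple_seqsP (v : 'I_7) (t : {set 'I_7}) : t \in triples_avoiding v ->
  exists s, [/\ s \in triple_seqs v, all (gtn 7) s & t = vset s].
Proof.
rewrite inE => /andP[/eqP t3 vt]; exists (map val (enum t)).
have lt_s : all (gtn 7) (map val (enum t)).
  by apply/allP => _ /mapP[x _ ->]; exact: ltn_ord.
have sorted_s : sorted ltn (map val (enum t)).
  rewrite -[enum _](eq_filter (mem_enum _)) -(eq_filter (mem_map val_inj _)) -filter_map.
  by rewrite (sorted_filter ltn_trans) // unlock val_ord_enum iota_ltn_sorted.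
split=> //; last first.
  by apply/setP => x; rewrite inE (mem_map val_inj) mem_enum.
rewrite mem_filter sorted_s (mem_map val_inj) mem_enum vt andTb.
have : size (map val (enum t)) = 3 by rewrite size_map -cardE t3.
move: lt_s; case: (map val (enum t)) => [|a [|b [|c []]]] // /and4P[a7 b7 c7 _] _.
apply: (allpairs_f (fun a bc => a :: bc)); first by rewrite mem_iota.
by apply: (allpairs_f (fun b c => [:: b; c])); rewrite mem_iota.
Qed.

Definition link_set (v : nat) (p : seq nat) : {set {set 'I_7}} :=
  [set t in map vset (link_lines v p)].

Lemma link_sets_disjoint v p q : perm_eq p (iota 0 7) -> perm_eq q (iota 0 7) ->
  links_disjoint v p q -> [disjoint link_set v p & link_set v q].
Proof.
move=> pP qP /allP disj; rewrite -setI_eq0; apply/eqP/setP => t; rewrite !inE.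
apply/negP => /andP[/mapP[l l_link ->] /mapP[l' l'_link]].
move: (l_link) (l'_link); rewrite !mem_filter => /andP[_ /(plane_line_triple pP)[lt_l _]].
move=> /andP[_ /(plane_line_triple qP)[lt_l' _]] /eqP.
by rewrite vset_eqE // => same; have /allP/(_ l' l'_link) := disj l l_link; rewrite same.
Qed.

Lemma plane_lines_in (H : hypergraph 7) (v : 'I_7) (s1 s2 p : seq nat) :
  perm_eq p (iota 0 7) -> avoids s1 s2 p -> all (gtn 7) s1 -> all (gtn 7) s2 ->
  triples_avoiding v :\: del H v \subset [set vset s1; vset s2] ->
  [disjoint link_set v p & triples_through v :\: [set e in H | v \in e]] ->
  {in plane_lines p, forall l, vset l \in H}.
Proof.
move=> pP avoid_p lt_s1 lt_s2 missing_del link_p l l_line.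
have [lt_l l3] := plane_line_triple pP l_line.
have [vl|vNl] := boolP (nat_of_ord v \in l).
  have /negbT : vset l \in triples_through v :\: [set e in H | v \in e] = false.
    by apply: (disjointFr link_p); rewrite inE; apply: map_f; rewrite mem_filter vl.
  by rewrite !inE l3 eqxx vl /= !andbT negbK.
have lT : vset l \in triples_avoiding v by rewrite !inE l3 eqxx.
have /andP[l_s1 l_s2] := allP avoid_p l l_line.
have l_other : vset l \notin [set vset s1; vset s2].
  by rewrite !inE !vset_eqE // negb_or l_s1.
suff : vset l \in del H v by rewrite inE => /andP[].
by apply: contraR l_other => l_del; apply: (subsetP missing_del); rewrite inE l_del lT.
Qed.

Lemma Fano_of_few_missing (H : hypergraph 7) (v : 'I_7) (t1 t2 : {set 'I_7}) :
  t1 \in triples_avoiding v -> t2 \in triples_avoiding v -> t1 :&: t2 != set0 ->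
  triples_avoiding v :\: del H v \subset [set t1; t2] ->
  #|triples_through v :\: [set e in H | v \in e]| <= 4 ->
  contains Fano H.
Proof.
move=> /triple_seqsP[s1 [s1T lt_s1 ->]] /triple_seqsP[s2 [s2T lt_s2 ->]].
move=> /set0Pn[x]; rewrite !inE => /andP[xs1 xs2] missing_del missing_link.
have /and3P[/eqP size_ps ps_ok ps_disj] : certified v s1 s2 (certificate v s1 s2).
  move/allP/(_ v): certificates_ok; rewrite mem_iota ltn_ord => /(_ isT)/allP/(_ s1 s1T)/allP.
  by apply; rewrite mem_filter s2T andbT; apply/hasP; exists (nat_of_ord x).
set ps := certificate v s1 s2 in size_ps ps_ok ps_disj.
have links_disj :
    pairwise (fun X Y : {set {set 'I_7}} => [disjoint X & Y]) (map (link_set v) ps).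
  rewrite pairwise_map.
  move: ps_disj; apply: (sub_in_pairwise (P := [pred p | perm_eq p (iota 0 7)])).
    by move=> p q pP qP; apply: link_sets_disjoint.
  by apply: sub_all ps_ok => p /andP[].
have [|_ /mapP[p p_ps ->] link_p] :=
  disjoint_pigeonhole (A := triples_through v :\: [set e in H | v \in e]) links_disj.
  by rewrite size_map size_ps ltnS.
have /andP[pP avoid_p] := allP ps_ok p p_ps.
exact: (contains_Fano_of_plane pP (plane_lines_in pP avoid_p lt_s1 lt_s2 missing_del link_p)).
Qed.

Theorem lemma2p3 (H : hypergraph 7) (v : 'I_7) :
  uniform3 H -> ~ contains Fano H ->
  11 <= deg H v -> 18 <= #|del H v| ->
  del_iso_B6 H v.
Proof.
move=> H3 noFano deg_v del_v.
set M := triples_avoiding v :\: del H v.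
have card_M : #|M| <= 2.
  rewrite cardsD (setIidPr (del_sub_triples_avoiding v H3)) card_triples_avoiding card_ord.
  by rewrite (_ : 'C(6, 3) = 20) //; exact: (leq_sub2l 20 del_v).
have card_missing_links : #|triples_through v :\: [set e in H | v \in e]| <= 4.
  rewrite cardsD (setIidPr (link_sub_triples_through v H3)) card_triples_through card_ord.
  by rewrite (_ : 'C(6, 2) = 15) //; exact: (leq_sub2l 15 deg_v).
have M_meet t1 t2 : t1 \in triples_avoiding v -> t2 \in triples_avoiding v ->
    t1 :&: t2 != set0 -> ~ M \subset [set t1; t2].
  by move=> t1T t2T meet M12; apply/noFano/(Fano_of_few_missing t1T t2T meet M12).
have triples_v : triples_avoiding v != set0.
  by rewrite -card_gt0 card_triples_avoiding card_ord.
have [[t tT Mt]|[X [Y [XT YT MXY]]]] := card_le2_cases (subsetDl _ _) card_M triples_v.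
  case: (M_meet t t tT tT); last by rewrite setUid.
  by move: tT; rewrite setIid inE -card_gt0 => /andP[/eqP ->].
have [dXY|meetXY] := boolP [disjoint X & Y].
  exact: del_iso_B6_of_missing_pair H3 XT YT dXY MXY.
by case: (M_meet X Y XT YT); rewrite ?setI_eq0 // -MXY.
Qed.
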